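(* For every pair $A,B$ of effect algebras, $$A\otimes B\cong L\bigl(R(A)\otimes_{\mathrm{Day}}R(B)\bigr),$$ where $\otimes_{\mathrm{Day}}$ is the Day convolution on $[\mathbf{FinBool}^{op},\mathbf{Set}]$ induced by the coproduct $*$ on $\mathbf{FinBool}$: $$(X\otimes_{\mathrm{Day}}Y)(c)=\int^{(c_1,c_2)}\mathbf{FinBool}(c,c_1*c_2)\times X(c_1)\times Y(c_2).$$
   Context: Effect algebras are partial algebras $(A;+,0,1)$ satisfying the Foulis–Bennett axioms; one-element effect algebras are allowed. Morphisms preserve $1$ and defined sums; $\mathbf{EA}$ is the category. Boolean algebras are effect algebras via: $x+y$ is defined iff $x\wedge y=0$, and then $x+y=x\vee y$. For $[n]=\{1,\dots,n\}$, $\mathbf{FinBool}$ is the full subcategory of Boolean algebras on the objects $2^{[n]}$, $n\in\mathbb N$. $E\colon\mathbf{FinBool}\to\mathbf{EA}$ is the inclusion, and $*$ is the coproduct of Boolean algebras. $R\colon\mathbf{EA}\to[\mathbf{FinBool}^{op},\mathbf{Set}]$ is given by $R(A)(2^{[n]})=\mathbf{EA}(E(2^{[n]}),A)$ and $R(A)(f)(g)=g\circ E(f)$. $L\colon[\mathbf{FinBool}^{op},\mathbf{Set}]\to\mathbf{EA}$ is given by $L(P)=\varinjlim\bigl(\int P\xrightarrow{\pi_P}\mathbf{FinBool}\xrightarrow{E}\mathbf{EA}\bigr)$. Here $\int P$ is the category of elements of $P$: - objects: pairs $(c,x)$ with $x\in P(c)$; - arrows $(c,x)\to(c',x')$: maps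 $f\colon c\to c'$ with $P(f)(x')=x$; and $\pi_P$ is the projection. $L$ is left adjoint to $R$. A bimorphism from $A,B$ to $C$ is a map $h\colon A\times B\to C$ with $h(1,1)=1$ that is additive (preserving orthogonality and sums) in each argument separately. The tensor product $A\otimes B$ is the universal (initial) bimorphism out of $A\times B$. *)

From HB Require Import structures.
From mathcomp Require Import all_boot all_order all_algebra.
From Stdlib Require Import Relations.
Set Implicit Arguments. Unset Strict Implicit. Unset Printing Implicit Defensive.

(* Effect algebras (Foulis--Bennett).  The partial sum is an option-valued *)
(* operation; one-element effect algebras (zero = one) are allowed.        *)
Record EffectAlgebra := {
  ea_car :> Type;
  ea_zero : ea_car;
  ea_one : ea_car;
  ea_sum : ea_car -> ea_car -> option ea_car;
  ea_comm : forall a b, ea_sum a b = ea_sum b a;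
  ea_assoc : forall a b c ab abc, ea_sum a b = Some ab -> ea_sum ab c = Some abc ->
     exists bc, ea_sum b c = Some bc /\ ea_sum a bc = Some abc;
  ea_ortho : forall a, exists! a', ea_sum a a' = Some ea_one;
  ea_zo : forall a x, ea_sum a ea_one = Some x -> a = ea_zero
}.

Definition is_eamor (A C : EffectAlgebra) (f : A -> C) : Prop :=
  f (ea_one A) = ea_one C /\
  forall a b c, ea_sum a b = Some c -> ea_sum (f a) (f b) = Some (f c).

Definition ea_iso (A C : EffectAlgebra) : Prop :=
  exists (f : A -> C) (g : C -> A), is_eamor f /\ is_eamor g /\
    (forall a, g (f a) = a) /\ (forall c, f (g c) = c).

Definition is_bimor (A B C : EffectAlgebra) (h : A -> B -> C) : Prop :=
  h (ea_one A) (ea_one B) = ea_one C /\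
  (forall b a1 a2 a, ea_sum a1 a2 = Some a -> ea_sum (h a1 b) (h a2 b) = Some (h a b)) /\
  (forall a b1 b2 b, ea_sum b1 b2 = Some b -> ea_sum (h a b1) (h a b2) = Some (h a b)).

Definition is_tensor (A B T : EffectAlgebra) (tau : A -> B -> T) : Prop :=
  is_bimor tau /\
  forall (C : EffectAlgebra) (h : A -> B -> C), is_bimor h ->
    (exists f : T -> C, is_eamor f /\ forall a b, f (tau a b) = h a b) /\
    (forall f g : T -> C, is_eamor f -> is_eamor g ->
       (forall a b, f (tau a b) = h a b) -> (forall a b, g (tau a b) = h a b) ->
       forall t, f t = g t).

(* FinBool: objects 2^[n], represented as {set 'I_n}; arrows are Boolean  *)
(* algebra homomorphisms.                                                  *)
Definition is_boolhom m n (f : {set 'I_m} -> {set 'I_n}) : Prop :=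
  f set0 = set0 /\ f setT = setT /\
  (forall X Y, f (X :|: Y) = f X :|: f Y) /\
  (forall X Y, f (X :&: Y) = f X :&: f Y) /\
  (forall X, f (~: X) = ~: f X).

Record bhom (m n : nat) := BHom {
  bfun :> {set 'I_m} -> {set 'I_n};
  bfunP : is_boolhom bfun }.

Lemma is_boolhom_comp m n k (g : {set 'I_n} -> {set 'I_k}) (f : {set 'I_m} -> {set 'I_n}) :
  is_boolhom g -> is_boolhom f -> is_boolhom (fun X => g (f X)).
Proof.
move=> [g0 [gT [gU [gI gC]]]] [f0 [fT [fU [fI fC]]]].
split; first by rewrite f0 g0.
split; first by rewrite fT gT.
split; first by move=> X Y; rewrite fU gU.
split; first by move=> X Y; rewrite fI gI.
by move=> X; rewrite fC gC.
Qed.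

Definition bcomp m n k (g : bhom n k) (f : bhom m n) : bhom m k :=
  BHom (is_boolhom_comp (bfunP g) (bfunP f)).

(* The chosen coproduct 2^[m] * 2^[n] = 2^[m*n] in FinBool, via the
   bijection mxvec_index : 'I_m * 'I_n -> 'I_(m*n). *)
Definition cinl m n (X : {set 'I_m}) : {set 'I_(m * n)} :=
  [set k | [exists i in X, exists j : 'I_n, k == mxvec_index i j]].
Definition cinr m n (Y : {set 'I_n}) : {set 'I_(m * n)} :=
  [set k | [exists i : 'I_m, exists j in Y, k == mxvec_index i j]].

Definition is_coprod_map m n m' n' (u : bhom m m') (v : bhom n n')
    (w : bhom (m * n) (m' * n')) : Prop :=
  (forall X, w (cinl n X) = cinl n' (u X)) /\
  (forall Y, w (cinr m Y) = cinr m' (v Y)).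

(* R(A)(2^[n]) = EA(E(2^[n]), A); an EA morphism out of E(2^[n]) is a map *)
(* g with g [n] = 1 and g(X) + g(Y) = g(X \/ Y) whenever X /\ Y = 0.       *)
Definition is_beamor n (A : EffectAlgebra) (g : {set 'I_n} -> A) : Prop :=
  g setT = ea_one A /\
  forall X Y : {set 'I_n}, [disjoint X & Y] -> ea_sum (g X) (g Y) = Some (g (X :|: Y)).

Record RA (A : EffectAlgebra) (n : nat) := MkRA {
  rfun :> {set 'I_n} -> A;
  rfunP : is_beamor rfun }.

Lemma is_beamor_pre (A : EffectAlgebra) m n (g : {set 'I_n} -> A) (f : bhom m n) :
  is_beamor g -> is_beamor (fun X => g (f X)).
Proof.
case: f => f [f0 [fT [fU [fI fC]]]] [gT gS]; split => /=; first by rewrite fT.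
move=> X Y dXY; rewrite fU; apply: gS.
by rewrite -setI_eq0 -fI; move: dXY; rewrite -setI_eq0 => /eqP ->; rewrite f0.
Qed.

Definition ramap A m n (f : bhom m n) (g : RA A n) : RA A m :=
  MkRA (is_beamor_pre f (rfunP g)).

(* Day convolution  (R(A) (x)_Day R(B))(c) =                               *)
(*   \int^{(c1,c2)} FinBool(c, c1*c2) x R(A)(c1) x R(B)(c2),               *)
(* realised as the usual quotient of the disjoint union by the coend       *)
(* relation (equivalence closure).                                         *)
Record DayEl (A B : EffectAlgebra) (p : nat) := MkDay {
  dm : nat; dn : nat;
  dh : bhom p (dm * dn);
  da : RA A dm;
  db : RA B dn }.

Inductive day_step (A B : EffectAlgebra) (p : nat) : DayEl A B p -> DayEl A B p -> Prop :=
| DayStep m n m' n' (u : bhom m m') (v : bhom n n') (w : bhom (m * n) (m' * n'))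
    (h : bhom p (m * n)) (a' : RA A m') (b' : RA B n') :
    is_coprod_map u v w ->
    day_step (MkDay h (ramap u a') (ramap v b'))
             (MkDay (bcomp w h) a' b').

Definition day_eq (A B : EffectAlgebra) (p : nat) : relation (DayEl A B p) :=
  clos_refl_sym_trans _ (@day_step A B p).

Definition day_act A B p q (k : bhom p q) (y : DayEl A B q) : DayEl A B p :=
  MkDay (bcomp (dh y) k) (da y) (db y).

(* L(D) = colim( \int D --pi--> FinBool --E--> EA ), for D the Day         *)
(* convolution above.  Objects of \int D: (p, x) with x in D(2^[p]);       *)
(* arrows (p,x) -> (q,y): k : 2^[p] -> 2^[q] with D(k)(y) = x.             *)
Definition el_arrow A B p q (x : DayEl A B p) (y : DayEl A B q) (k : bhom p q) : Prop :=
  day_eq (day_act k y) x.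

Definition is_cocone (A B C : EffectAlgebra)
    (psi : forall p, DayEl A B p -> {set 'I_p} -> C) : Prop :=
  (forall p x, is_beamor (psi p x)) /\
  (forall p q (x : DayEl A B p) (y : DayEl A B q) (k : bhom p q),
     el_arrow x y k -> forall X, psi q y (k X) = psi p x X).

Definition is_colimit (A B Lo : EffectAlgebra)
    (phi : forall p, DayEl A B p -> {set 'I_p} -> Lo) : Prop :=
  is_cocone phi /\
  forall (C : EffectAlgebra) (psi : forall p, DayEl A B p -> {set 'I_p} -> C),
    is_cocone psi ->
    (exists t : Lo -> C, is_eamor t /\ forall p x X, t (phi p x X) = psi p x X) /\
    (forall t1 t2 : Lo -> C, is_eamor t1 -> is_eamor t2 ->
       (forall p x X, t1 (phi p x X) = psi p x X) ->
       (forall p x X, t2 (phi p x X) = psi p x X) ->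
       forall l, t1 l = t2 l).

(* Both sides classify bimorphisms out of A x B.  An element x of an effect
   algebra is the same as a morphism [point x] out of the four-element Boolean
   algebra 2^[2], and a defined sum x1 + x2 = x is witnessed by a morphism out
   of 2^[3]; so evaluating a cocone psi at [point x], [point y] and the atom
   {0} x {0} of 2^[2] * 2^[2] yields a bimorphism, because by the coend relation
   psi on a rectangle S x S' only depends on a S and b S'.  Conversely a
   bimorphism h turns morphisms a, b out of 2^[m], 2^[n] into the morphism out
   of 2^[m] * 2^[n] sending the atom (i, j) to h (a i) (b j), and precomposing
   with the Day component gives a cocone, since coproduct maps send rectangles
   to rectangles.  The two constructions are inverse on generators, so the
   universal properties of A (x) B and of the colimit give inverse
   isomorphisms. *)

From HB Require Import structures.
From mathcomp Require Import all_boot all_order all_algebra.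
From Stdlib Require Import Relations ClassicalEpsilon FunctionalExtensionality ProofIrrelevance.
Set Implicit Arguments. Unset Strict Implicit. Unset Printing Implicit Defensive.

Section EffectAlgebraTheory.
Variable C : EffectAlgebra.

Lemma ea_orthoU (x a b : C) :
  ea_sum x a = Some (ea_one C) -> ea_sum x b = Some (ea_one C) -> a = b.
Proof. by move=> ha hb; case: (ea_ortho x) => x' [_ U]; rewrite -(U _ ha) -(U _ hb). Qed.

Definition ea_supp (x : C) : C :=
  proj1_sig (constructive_indefinite_description _ (ea_ortho x)).

Lemma ea_suppP (x : C) : ea_sum x (ea_supp x) = Some (ea_one C).
Proof. by rewrite /ea_supp; case: constructive_indefinite_description => ? []. Qed.

Lemma ea_suppK (x : C) : ea_supp (ea_supp x) = x.
Proof. by apply: (@ea_orthoU (ea_supp x)); rewrite ?ea_suppP // ea_comm ea_suppP. Qed.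

Lemma ea_supp1 : ea_supp (ea_one C) = ea_zero C.
Proof. by apply: (@ea_zo C _ (ea_one C)); rewrite ea_comm ea_suppP. Qed.

Lemma ea_sum0r (x : C) : ea_sum x (ea_zero C) = Some x.
Proof.
have s10 : ea_sum (ea_one C) (ea_zero C) = Some (ea_one C) by rewrite -ea_supp1 ea_suppP.
rewrite -(ea_suppK x); case: (ea_assoc (ea_suppP (ea_supp x)) s10) => y [-> e].
by rewrite (ea_orthoU e (ea_suppP _)).
Qed.

Lemma ea_sum0l (x : C) : ea_sum (ea_zero C) x = Some x.
Proof. by rewrite ea_comm ea_sum0r. Qed.

Lemma ea_cancel (a b c r : C) : ea_sum a b = Some r -> ea_sum a c = Some r -> b = c.
Proof.
(* b and c are both the orthosupplement of (ea_supp r) + a. *)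
move=> hb hc.
case: (ea_assoc hb (ea_suppP r)) => e [be ae].
case: (ea_assoc hc (ea_suppP r)) => e' [ce ae'].
have ee : e = e' by rewrite (ea_orthoU ae (ea_suppP a)) (ea_orthoU ae' (ea_suppP a)).
subst e'; have ea1 : ea_sum e a = Some (ea_one C) by rewrite ea_comm.
case: (ea_assoc be ea1) => d [d1 d2]; case: (ea_assoc ce ea1) => d' [d1' d2'].
rewrite d1 in d1'; case: d1' => <- in d2'.
by apply: (@ea_orthoU d); rewrite ea_comm.
Qed.

Lemma ea_sum_id (y : C) : ea_sum y y = Some y -> y = ea_zero C.
Proof. by move=> h; apply: (ea_cancel h); rewrite ea_sum0r. Qed.

(* With [None] absorbing, the partial sum becomes a commutative monoid law on
   [option C], so that finite partial sums are bigops. *)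
Definition oadd (x y : option C) : option C :=
  if x is Some a then if y is Some b then ea_sum a b else None else None.

Lemma oadd_assoc_some (a b c r : C) :
  oadd (ea_sum a b) (Some c) = Some r -> oadd (Some a) (ea_sum b c) = Some r.
Proof.
case ab: ea_sum => [s|] //= abc.
by case: (ea_assoc ab abc) => bc [/= -> ->].
Qed.

Lemma oaddC : commutative oadd.
Proof. by move=> [a|] [b|] //=; rewrite ea_comm. Qed.

Lemma oadd_sumA (a b c : C) : oadd (Some a) (ea_sum b c) = oadd (ea_sum a b) (Some c).
Proof.
have bwd r : oadd (Some a) (ea_sum b c) = Some r -> oadd (ea_sum a b) (Some c) = Some r.
  by rewrite oaddC ea_comm => /oadd_assoc_some; rewrite oaddC ea_comm.
case e: (oadd (ea_sum a b) (Some c)) => [r|]; first exact: oadd_assoc_some.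
by case e': (oadd (Some a) _) => [r|] //; rewrite (bwd _ e') in e.
Qed.

Lemma oadd0 : left_id (Some (ea_zero C)) oadd.
Proof. by move=> [x|] //=; rewrite ea_sum0l. Qed.

Lemma oaddA : associative oadd.
Proof.
move=> [a|] [b|] [c|] //=; first exact: oadd_sumA.
by case: ea_sum.
Qed.

End EffectAlgebraTheory.

HB.instance Definition _ (C : EffectAlgebra) :=
  Monoid.isComLaw.Build (option C) (Some (ea_zero C)) (@oadd C)
    (@oaddA C) (@oaddC C) (@oadd0 C).

Definition ea_additive (C D : EffectAlgebra) (g : C -> D) : Prop :=
  forall a b c, ea_sum a b = Some c -> ea_sum (g a) (g b) = Some (g c).

Lemma additive0 (C D : EffectAlgebra) (g : C -> D) :
  ea_additive g -> g (ea_zero C) = ea_zero D.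
Proof. by move=> ag; apply: ea_sum_id; apply: ag; rewrite ea_sum0r. Qed.

Section Bimorphism.
Variables (A B C : EffectAlgebra) (h : A -> B -> C).
Hypothesis hb : is_bimor h.

Lemma bimor_additivel (b : B) : ea_additive (h^~ b).
Proof. by case: hb => _ [hl _] a1 a2 a; apply: hl. Qed.

Lemma bimor_additiver (a : A) : ea_additive (h a).
Proof. by case: hb => _ [_ hr]; apply: hr. Qed.
End Bimorphism.

Lemma beamor0 n (C : EffectAlgebra) (g : {set 'I_n} -> C) :
  is_beamor g -> g set0 = ea_zero C.
Proof.
by case=> _ gU; apply: ea_sum_id; rewrite -{3}(setU0 set0) gU // -setI_eq0 setI0.
Qed.

Lemma eamor_beamor n (C D : EffectAlgebra) (f : C -> D) (g : {set 'I_n} -> C) :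
  is_eamor f -> is_beamor g -> is_beamor (f \o g).
Proof.
move=> [f1 fS] [g1 gU]; split=> [|X Y d] /=; first by rewrite g1 f1.
by apply: fS; apply: gU.
Qed.

Lemma eamor_comp (C D E : EffectAlgebra) (g : D -> E) (f : C -> D) :
  is_eamor g -> is_eamor f -> is_eamor (g \o f).
Proof.
move=> [g1 gS] [f1 fS]; split=> [|a b c e] /=; first by rewrite f1 g1.
by apply: gS; apply: fS.
Qed.

Definition esum (C : EffectAlgebra) (I : finType) (F : I -> C) (Z : {set I}) : option C :=
  \big[@oadd C/Some (ea_zero C)]_(i in Z) Some (F i).

Section FiniteSums.
Variable C : EffectAlgebra.

Lemma esum1 (I : finType) (F : I -> C) i : esum F [set i] = Some (F i).
Proof. exact: big_set1. Qed.

Lemma esumU (I : finType) (F : I -> C) (Y Z : {set I}) : [disjoint Y & Z] ->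
  esum F (Y :|: Z) = oadd (esum F Y) (esum F Z).
Proof. by move=> d; rewrite /esum -bigU //; apply: eq_bigl => i; rewrite inE. Qed.

Lemma esum_additive (D : EffectAlgebra) (g : C -> D) (I : finType) (F : I -> C) Z s :
  ea_additive g -> esum F Z = Some s -> esum (g \o F) Z = Some (g s).
Proof.
move=> ag; move: s; rewrite /esum.
apply: (big_ind2 (fun x y => forall s, y = Some s -> x = Some (g s))) => //=.
- by move=> _ [<-]; rewrite additive0.
- move=> x1 [s1|] y1 [s2|] // IH1 IH2 s /= e.
  by rewrite (IH1 s1) // (IH2 s2) //= (ag _ _ _ e).
- by move=> i _ _ [<-].
Qed.

Lemma esum_atoms n (g : {set 'I_n} -> C) (Z : {set 'I_n}) :
  is_beamor g -> esum (fun i => g [set i]) Z = Some (g Z).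
Proof.
move=> gb; rewrite /esum -big_enum -{2}(set_enum Z).
elim: (enum Z) (enum_uniq (pred_of_set Z)) => [_|i s IH] /=.
  by rewrite big_nil -(beamor0 gb); congr (Some (g _)); apply/setP => x; rewrite !inE.
case/andP=> is_ us; rewrite big_cons IH // set_cons /=.
by apply: (proj2 gb); rewrite disjoints1 inE.
Qed.

Lemma eq_beamor n (g1 g2 : {set 'I_n} -> C) : is_beamor g1 -> is_beamor g2 ->
  (forall i, g1 [set i] = g2 [set i]) -> g1 =1 g2.
Proof.
move=> gb1 gb2 e Z; apply: Some_inj.
rewrite -(esum_atoms _ gb1) -(esum_atoms _ gb2) /esum; by apply: eq_bigr => i _; rewrite e.
Qed.
End FiniteSums.

Section BeamorOfAtoms.
Variables (C : EffectAlgebra) (n : nat) (F : 'I_n -> C).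

Definition beamor_of (Z : {set 'I_n}) : C := odflt (ea_zero C) (esum F Z).

Hypothesis F1 : esum F setT = Some (ea_one C).

Lemma beamor_ofE Z : esum F Z = Some (beamor_of Z).
Proof.
have dZ : [disjoint Z & ~: Z] by rewrite -setI_eq0 setICr.
move: F1; rewrite -(setUCr Z) esumU // /beamor_of.
by case: (esum F Z).
Qed.

Lemma beamor_ofP : is_beamor beamor_of.
Proof.
split=> [|Y Z d]; first by rewrite /beamor_of F1.
by rewrite -beamor_ofE esumU // !beamor_ofE.
Qed.

Lemma beamor_of1 i : beamor_of [set i] = F i.
Proof. by rewrite /beamor_of esum1. Qed.
End BeamorOfAtoms.

Definition ra_of (C : EffectAlgebra) n (F : 'I_n -> C)
    (F1 : esum F setT = Some (ea_one C)) : RA C n :=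
  MkRA (beamor_ofP F1).

Lemma esumT_ord (C : EffectAlgebra) n (F : 'I_n -> C) :
  esum F setT = \big[@oadd C/Some (ea_zero C)]_(i < n) Some (F i).
Proof. by apply: eq_bigl => i; rewrite inE. Qed.

Lemma RA_ext (C : EffectAlgebra) n (f g : RA C n) : f =1 g -> f = g.
Proof.
case: f g => f fP [g gP] /= /functional_extensionality e.
by subst g; rewrite (proof_irrelevance _ fP gP).
Qed.

Section Points.
Variable C : EffectAlgebra.

Lemma point_total (x : C) :
  esum (fun i : 'I_2 => if i == ord0 then x else ea_supp x) setT = Some (ea_one C).
Proof. by rewrite esumT_ord !big_ord_recl big_ord0 /= ea_sum0r /= ea_suppP. Qed.

Definition point (x : C) : RA C 2 := ra_of (point_total x).

Lemma point0 (x : C) : point x [set ord0] = x.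
Proof. by rewrite /= beamor_of1. Qed.

Lemma pointE (g : RA C 2) : g = point (g [set ord0]).
Proof.
apply/RA_ext/eq_beamor; [exact: rfunP | exact: rfunP |].
have d : [disjoint [set (ord0 : 'I_2)] & [set ord_max]] by rewrite disjoints1 inE.
have U : [set (ord0 : 'I_2)] :|: [set ord_max] = setT.
  by apply/setP => i; rewrite !inE; case: i => [[|[|]]].
case=> [[|[|//]]] lt; rewrite /= beamor_of1 /=.
  by congr (g [set _]); apply: val_inj.
have -> : Ordinal lt = ord_max by apply: val_inj.
apply: (@ea_orthoU _ (g [set ord0])); last exact: ea_suppP.
by rewrite (proj2 (rfunP g) _ _ d) U (proj1 (rfunP g)).
Qed.

Lemma ea_sum_RA3 (x1 x2 x : C) : ea_sum x1 x2 = Some x -> exists g : RA C 3,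
  [/\ g [set ord0] = x1, g [set Ordinal (isT : 1 < 3)] = x2
     & g ([set ord0] :|: [set Ordinal (isT : 1 < 3)]) = x].
Proof.
move=> e.
pose F (i : 'I_3) := if val i == 0 then x1 else if val i == 1 then x2 else ea_supp x.
have F1 : esum F setT = Some (ea_one C).
  rewrite esumT_ord !big_ord_recl big_ord0 /= /F /= ea_sum0r.
  by case: (ea_assoc e (ea_suppP x)) => y [-> ->].
exists (ra_of F1); rewrite /= !beamor_of1; split=> //.
have d : [disjoint [set ord0] & [set Ordinal (isT : 1 < 3)]] by rewrite disjoints1 inE.
by have := proj2 (beamor_ofP F1) _ _ d; rewrite !beamor_of1 e => -[].
Qed.
End Points.

Section ProductIndex.
Variables m n : nat.

Definition mxvec_split (k : 'I_(m * n)) : 'I_m * 'I_n :=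
  enum_val (cast_ord (esym (mxvec_cast m n)) k).

Lemma mxvec_splitK (i : 'I_m) (j : 'I_n) : mxvec_split (mxvec_index i j) = (i, j).
Proof. by rewrite /mxvec_split /mxvec_index cast_ordK enum_rankK. Qed.

Lemma mxvec_indexK (k : 'I_(m * n)) :
  mxvec_index (mxvec_split k).1 (mxvec_split k).2 = k.
Proof. by rewrite /mxvec_index -surjective_pairing /mxvec_split enum_valK cast_ordKV. Qed.

Lemma mxvec_split_inj : injective mxvec_split.
Proof. by move=> k1 k2 e; rewrite -(mxvec_indexK k1) e mxvec_indexK. Qed.

Definition rect (S : {set 'I_m}) (S' : {set 'I_n}) : {set 'I_(m * n)} :=
  cinl n S :&: cinr m S'.

Lemma in_cinl (S : {set 'I_m}) k : (k \in cinl n S) = ((mxvec_split k).1 \in S).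
Proof.
rewrite inE; apply/existsP/idP => [[i /andP [iS /existsP [j /eqP ->]]] | kS].
  by rewrite mxvec_splitK.
exists (mxvec_split k).1; rewrite kS /=; apply/existsP.
by exists (mxvec_split k).2; rewrite mxvec_indexK.
Qed.

Lemma in_cinr (S' : {set 'I_n}) k : (k \in cinr m S') = ((mxvec_split k).2 \in S').
Proof.
rewrite inE; apply/existsP/idP => [[i /existsP [j /andP [jS /eqP ->]]] | kS].
  by rewrite mxvec_splitK.
exists (mxvec_split k).1; apply/existsP.
by exists (mxvec_split k).2; rewrite kS mxvec_indexK eqxx.
Qed.

Lemma in_rect (S : {set 'I_m}) (S' : {set 'I_n}) k :
  (k \in rect S S') = ((mxvec_split k).1 \in S) && ((mxvec_split k).2 \in S').
Proof. by rewrite inE in_cinl in_cinr. Qed.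

Lemma rect_set1 k : [set k] = rect [set (mxvec_split k).1] [set (mxvec_split k).2].
Proof.
apply/setP => k'; rewrite in_rect !inE -xpair_eqE -!surjective_pairing.
by rewrite (inj_eq mxvec_split_inj).
Qed.

Lemma rectTT : rect setT setT = setT.
Proof. by apply/setP => k; rewrite in_rect !inE. Qed.

Lemma rectUl (X Y : {set 'I_m}) (S' : {set 'I_n}) :
  rect (X :|: Y) S' = rect X S' :|: rect Y S'.
Proof. by apply/setP => k; rewrite !(in_rect, inE) andb_orl. Qed.

Lemma rectUr (S : {set 'I_m}) (X Y : {set 'I_n}) :
  rect S (X :|: Y) = rect S X :|: rect S Y.
Proof. by apply/setP => k; rewrite !(in_rect, inE) andb_orr. Qed.

Lemma rect_disjl (X Y : {set 'I_m}) (S' : {set 'I_n}) :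
  [disjoint X & Y] -> [disjoint rect X S' & rect Y S'].
Proof.
move=> d; rewrite -setI_eq0; apply/eqP/setP => k; rewrite !(in_rect, inE).
by case kX: (_ \in X) => //=; rewrite (disjointFr d kX) /= andbF.
Qed.

Lemma rect_disjr (S : {set 'I_m}) (X Y : {set 'I_n}) :
  [disjoint X & Y] -> [disjoint rect S X & rect S Y].
Proof.
move=> d; rewrite -setI_eq0; apply/eqP/setP => k; rewrite !(in_rect, inE).
by case kX: (_ \in X); rewrite ?andbF //= (disjointFr d kX) !andbF.
Qed.

Lemma big_rect (R : Type) (idx : R) (op : Monoid.com_law idx)
    (S : {set 'I_m}) (S' : {set 'I_n}) (F : 'I_(m * n) -> R) :
  \big[op/idx]_(k in rect S S') F k =
    \big[op/idx]_(i in S) \big[op/idx]_(j in S') F (mxvec_index i j).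
Proof.
rewrite pair_big (reindex mxvec_split) /=.
  by apply: eq_big => k; rewrite ?in_rect ?mxvec_indexK.
exists (fun p => mxvec_index p.1 p.2) => [k _ | [i j] _]; first exact: mxvec_indexK.
exact: mxvec_splitK.
Qed.
End ProductIndex.

Lemma bhom_ext m n (f g : bhom m n) : f =1 g -> f = g.
Proof.
case: f g => f fP [g gP] /= /functional_extensionality e.
by subst g; rewrite (proof_irrelevance _ fP gP).
Qed.

Lemma is_boolhom_id n : is_boolhom (fun X : {set 'I_n} => X).
Proof. by do !split. Qed.

Definition bhom_id n : bhom n n := BHom (@is_boolhom_id n).

Lemma bcomp_idl m n (f : bhom m n) : bcomp (bhom_id n) f = f.
Proof. exact: bhom_ext. Qed.

Lemma bcomp_idr m n (f : bhom m n) : bcomp f (bhom_id m) = f.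
Proof. exact: bhom_ext. Qed.

Lemma is_boolhom_preim m n (phi : 'I_n -> 'I_m) :
  is_boolhom (fun X : {set 'I_m} => phi @^-1: X).
Proof.
split; first exact: preimset0. split; first exact: preimsetT.
split; first exact: preimsetU. split; first exact: preimsetI. exact: preimsetC.
Qed.

Definition bhom_preim m n (phi : 'I_n -> 'I_m) : bhom m n := BHom (is_boolhom_preim phi).

Definition prod_map m n m' n' (phi : 'I_m' -> 'I_m) (psi : 'I_n' -> 'I_n)
  (k : 'I_(m' * n')) : 'I_(m * n) :=
  mxvec_index (phi (mxvec_split k).1) (psi (mxvec_split k).2).

Lemma coprod_map_preim m n m' n' (phi : 'I_m' -> 'I_m) (psi : 'I_n' -> 'I_n) :
  is_coprod_map (bhom_preim phi) (bhom_preim psi) (bhom_preim (prod_map phi psi)).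
Proof. by split=> X; apply/setP => k; rewrite /= !(in_cinl, in_cinr, inE) mxvec_splitK. Qed.

Lemma preim_rect m n m' n' (phi : 'I_m' -> 'I_m) (psi : 'I_n' -> 'I_n) S S' :
  bhom_preim (prod_map phi psi) (rect S S') = rect (phi @^-1: S) (psi @^-1: S').
Proof. by apply/setP => k; rewrite /= !(in_rect, inE) mxvec_splitK. Qed.

Lemma coprod_map_rect m n m' n' (u : bhom m m') (v : bhom n n') (w : bhom (m * n) (m' * n'))
    S S' : is_coprod_map u v w -> w (rect S S') = rect (u S) (v S').
Proof. by case=> wl wr; case: (bfunP w) => _ [_ [_ [wI _]]]; rewrite wI wl wr. Qed.

Section BimorphismProduct.
Variables (A B C : EffectAlgebra) (h : A -> B -> C).
Variables (m n : nat) (a : RA A m) (b : RA B n).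

Definition bimor_atoms (k : 'I_(m * n)) : C :=
  h (a [set (mxvec_split k).1]) (b [set (mxvec_split k).2]).

Definition bimor_prod : {set 'I_(m * n)} -> C := beamor_of bimor_atoms.

Hypothesis hb : is_bimor h.

Lemma esum_bimor_atoms S S' : esum bimor_atoms (rect S S') = Some (h (a S) (b S')).
Proof.
have row i : esum (fun j => h (a [set i]) (b [set j])) S' = Some (h (a [set i]) (b S')).
  exact: (esum_additive (bimor_additiver hb _) (esum_atoms _ (rfunP b))).
rewrite /esum big_rect -(esum_additive (bimor_additivel hb _) (esum_atoms _ (rfunP a))).
apply: eq_bigr => i _; rewrite -row; apply: eq_bigr => j _.
by rewrite /bimor_atoms mxvec_splitK.
Qed.

Lemma esum_bimor_atomsT : esum bimor_atoms setT = Some (ea_one C).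
Proof.
by rewrite -rectTT esum_bimor_atoms (proj1 (rfunP a)) (proj1 (rfunP b)) (proj1 hb).
Qed.

Lemma bimor_prodP : is_beamor bimor_prod.
Proof. exact: beamor_ofP esum_bimor_atomsT. Qed.

Lemma bimor_prod_rect S S' : bimor_prod (rect S S') = h (a S) (b S').
Proof. by apply: Some_inj; rewrite -beamor_ofE ?esum_bimor_atoms ?esum_bimor_atomsT. Qed.
End BimorphismProduct.

Section BimorphismCocone.
Variables (A B C : EffectAlgebra) (h : A -> B -> C).

Definition bimor_cocone p (x : DayEl A B p) (X : {set 'I_p}) : C :=
  bimor_prod h (da x) (db x) (dh x X).

Hypothesis hb : is_bimor h.

Lemma bimor_cocone_step p (x y : DayEl A B p) :
  day_step x y -> bimor_cocone x =1 bimor_cocone y.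
Proof.
case=> m n m' n' u v w h0 a' b' cw X; rewrite /bimor_cocone /=.
have wb := is_beamor_pre w (bimor_prodP a' b' hb).
apply: (eq_beamor (bimor_prodP _ _ hb) wb) => k.
by rewrite rect_set1 /= !bimor_prod_rect // (coprod_map_rect _ _ cw) bimor_prod_rect.
Qed.

Lemma bimor_cocone_day_eq p (x y : DayEl A B p) :
  day_eq x y -> bimor_cocone x =1 bimor_cocone y.
Proof.
elim=> [x0 y0 /bimor_cocone_step | x0 | x0 y0 _ IH | x0 y0 z0 _ IH1 _ IH2] // X.
by rewrite IH1 IH2.
Qed.

Lemma bimor_coconeP : is_cocone bimor_cocone.
Proof.
split=> [p x | p q x y k e X]; first exact: (is_beamor_pre (dh x) (bimor_prodP _ _ hb)).
by rewrite -(bimor_cocone_day_eq e X).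
Qed.
End BimorphismCocone.

Section CoconeBimorphism.
Variables (A B C : EffectAlgebra) (psi : forall p, DayEl A B p -> {set 'I_p} -> C).
Hypothesis hpsi : is_cocone psi.

Lemma cocone_day_eq p (x y : DayEl A B p) : day_eq x y -> psi x =1 psi y.
Proof.
move=> e X; have xy : el_arrow x y (bhom_id p).
  by case: y e => m n h a b e; rewrite /el_arrow /day_act bcomp_idr; apply: rst_sym.
by rewrite -(proj2 hpsi _ _ _ _ _ xy X).
Qed.

Lemma cocone_dayE p m n (h : bhom p (m * n)) (a : RA A m) (b : RA B n) X :
  psi (MkDay h a b) X = psi (MkDay (bhom_id _) a b) (h X).
Proof.
have e : el_arrow (MkDay h a b) (MkDay (bhom_id _) a b) h.
  by rewrite /el_arrow /day_act /= bcomp_idl; apply: rst_refl.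
by rewrite -(proj2 hpsi _ _ _ _ _ e X).
Qed.

Definition cocone_bimor (x : A) (y : B) : C :=
  psi (MkDay (bhom_id (2 * 2)) (point x) (point y)) (rect [set ord0] [set ord0]).

Lemma cocone_rect m n (a : RA A m) (b : RA B n) S S' :
  psi (MkDay (bhom_id _) a b) (rect S S') = cocone_bimor (a S) (b S').
Proof.
(* Along the maps classifying S and S', the Day element (a, b) is related to
   (point (a S), point (b S')). *)
pose chi l (Z : {set 'I_l}) (i : 'I_l) : 'I_2 := if i \in Z then ord0 else ord_max.
have chiK l (Z : {set 'I_l}) : chi l Z @^-1: [set ord0] = Z.
  by apply/setP => i; rewrite !inE /chi; case: (i \in Z).
have ra_chi l (c : RA _ l) (Z : {set 'I_l}) : ramap (bhom_preim (chi l Z)) c = point (c Z).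
  by rewrite [LHS]pointE /= chiK.
have step := DayStep (bhom_id (2 * 2)) a b (coprod_map_preim (chi m S) (chi n S')).
rewrite -[in LHS](chiK m S) -[in LHS](chiK n S') -preim_rect -cocone_dayE.
by rewrite -(bcomp_idr (bhom_preim _)) -(cocone_day_eq (@rst_step _ _ _ _ step)) !ra_chi.
Qed.

Lemma cocone_bimorP : is_bimor cocone_bimor.
Proof.
have psiU p x := proj2 (proj1 hpsi p x).
split; [|split].
- rewrite -(proj1 (rfunP (point (ea_one A)))) -(proj1 (rfunP (point (ea_one B)))).
  by rewrite -cocone_rect rectTT; apply: (proj1 (proj1 hpsi _ _)).
- move=> y x1 x2 x e; have [g [<- <- <-]] := ea_sum_RA3 e.
  rewrite -(point0 y) -!cocone_rect rectUl; apply/psiU/rect_disjl.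
  by rewrite disjoints1 inE.
- move=> x y1 y2 y e; have [g [<- <- <-]] := ea_sum_RA3 e.
  rewrite -(point0 x) -!cocone_rect rectUr; apply/psiU/rect_disjr.
  by rewrite disjoints1 inE.
Qed.
End CoconeBimorphism.

Lemma bimor_cocone_eamor (A B T L : EffectAlgebra) (tau : A -> B -> T)
    (phi : forall p, DayEl A B p -> {set 'I_p} -> L) (f : T -> L) :
  is_bimor tau -> is_cocone phi -> is_eamor f ->
  (forall a b, f (tau a b) = cocone_bimor phi a b) ->
  forall p x X, f (bimor_cocone tau x X) = phi p x X.
Proof.
move=> taub phic fm fE p [m n h a b] X; rewrite /bimor_cocone /= (cocone_dayE phic).
apply: (eq_beamor (eamor_beamor fm (bimor_prodP _ _ taub)) (proj1 phic _ _)) => k.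
by rewrite /= rect_set1 bimor_prod_rect // fE cocone_rect.
Qed.

Theorem mainTheorem9 (A B T Lo : EffectAlgebra) (tau : A -> B -> T)
    (phi : forall p, DayEl A B p -> {set 'I_p} -> Lo) :
  is_tensor tau -> is_colimit phi -> ea_iso T Lo.
Proof.
move=> [taub tauU] [phic phiU].
have [[f [fm fE]] _] := tauU Lo _ (cocone_bimorP phic).
have [[g [gm gE]] _] := phiU T _ (bimor_coconeP taub).
have gfE a b : g (f (tau a b)) = tau a b.
  by rewrite fE gE /bimor_cocone /= bimor_prod_rect // !point0.
have fgE p x X : f (g (phi p x X)) = phi p x X.
  by rewrite gE; apply: bimor_cocone_eamor.
have idm (C : EffectAlgebra) : is_eamor (@id C) by [].
exists f, g; split=> //; split=> //; split.
- exact: (proj2 (tauU T tau taub) (g \o f) id (eamor_comp gm fm) (idm T) gfE).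
- exact: (proj2 (phiU Lo phi phic) (f \o g) id (eamor_comp fm gm) (idm Lo) fgE).
Qed.
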